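(* Let $a$ be a positive integer. If there exists a Hadamard matrix of order $4a$, then there exists a $(4a-2)$--$\mathrm{MOFR}(4,2a;2)$.
   Context: A Hadamard matrix of order $N$ is an $N\times N$ matrix $H$ with entries in $\{1,-1\}$ satisfying $HH^T=NI_N$. A frequency rectangle of type $\mathrm{FR}(m,n;q)$ is an $m\times n$ array on a symbol set of size $q$ in which each symbol appears exactly $n/q$ times in each row and $m/q$ times in each column. Two frequency rectangles of the same type are orthogonal if upon superimposition each ordered pair of symbols appears the same number of times. A $k$--$\mathrm{MOFR}(m,n;q)$ is a set of $k$ pairwise orthogonal frequency rectangles of type $\mathrm{FR}(m,n;q)$. *)

From mathcomp Require Import all_boot all_order all_algebra.
Set Implicit Arguments. Unset Strict Implicit. Unset Printing Implicit Defensive.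
Import GRing.Theory Num.Theory.

Definition hadamard (N : nat) (H : 'M[int]_N) : Prop :=
  (forall i j, H i j = 1%R \/ H i j = (-1)%R) /\
  (H *m H^T = (N%:R)%:M)%R.

Definition freq_rect (m n q : nat) (F : 'M['I_q]_(m, n)) : Prop :=
  (q %| n) /\ (q %| m) /\
  (forall (i : 'I_m) (s : 'I_q), #|[set j : 'I_n | F i j == s]| = n %/ q) /\
  (forall (j : 'I_n) (s : 'I_q), #|[set i : 'I_m | F i j == s]| = m %/ q).

Definition orth_fr (m n q : nat) (F G : 'M['I_q]_(m, n)) : Prop :=
  exists c : nat, forall s t : 'I_q,
    #|[set p : 'I_m * 'I_n | (F p.1 p.2 == s) && (G p.1 p.2 == t)]| = c.

Definition MOFR (k m n q : nat) (Fs : 'I_k -> 'M['I_q]_(m, n)) : Prop :=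
  (forall r, freq_rect (Fs r)) /\
  (forall r r', r != r' -> orth_fr (Fs r) (Fs r')).

From mathcomp Require Import all_boot all_order all_algebra.
From mathcomp Require Import zify ring.
Set Implicit Arguments. Unset Strict Implicit. Unset Printing Implicit Defensive.
Import GRing.Theory Num.Theory.
Local Open Scope ring_scope.

(* Normalise the Hadamard matrix H of order 4a by multiplying every column by
   its entry in a fixed row i0, so that row i0 becomes all ones, and let P be
   the set of the 2a columns where the normalised row i1 is +1.  Every other
   normalised row w is orthogonal to rows i0 and i1, hence sums to zero both on
   P and on its complement.  Folding w into the 4 x 2a array with rows
   w|P, -w|P, w|P^c, -w|P^c gives a +-1 array with zero row and column sums,
   i.e. an FR(4,2a;2); the folded arrays of two distinct rows have inner
   product twice that of the rows, namely 0, which for +-1 arrays with zero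
   sums means that every pair of symbols occurs equally often. *)

Definition is_sign (x : int) : Prop := x = 1 \/ x = -1.

Lemma is_signM x y : is_sign x -> is_sign y -> is_sign (x * y).
Proof. by case=> ->; case=> ->; [left|right|right|left]. Qed.

Lemma sign_mul_self x : is_sign x -> x * x = 1.
Proof. by case=> ->. Qed.

Lemma big_setC_split (T : finType) (A : {set T}) (F : T -> int) :
  \sum_t F t = \sum_(t in A) F t + \sum_(t in ~: A) F t.
Proof.
rewrite (bigID (mem A)) /=; congr (_ + _).
by apply: eq_bigl => t; rewrite in_setC.
Qed.

Lemma sum_enum_ord (T : finType) (A : {set T}) n : #|A| = n ->
  exists e : 'I_n -> T, forall F : T -> int, \sum_(t in A) F t = \sum_j F (e j).
Proof. by move=> <-; exists enum_val => F; rewrite big_enum_val. Qed.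

Section SignCounting.
Variable T : finType.
Implicit Types (f g z : T -> int) (e d : int).

Lemma card_sign_eq f e : (forall t, is_sign (f t)) -> is_sign e ->
  (#|[set t | f t == e]| * 2)%:Z = #|T|%:Z + e * \sum_t f t.
Proof.
move=> sf se.
have -> : #|T|%:Z + e * \sum_t f t = \sum_t (1 + e * f t).
  by rewrite big_split /= sumr_const mulr_sumr natz.
rewrite (eq_bigr (fun t => if f t == e then 2 else 0)); last first.
  by move=> t _; case: (sf t) => ->; case: se => ->.
by rewrite -big_mkcond /= sumr_const cardsE; lia.
Qed.

Lemma card_sign_pair_eq f g e d :
  (forall t, is_sign (f t)) -> (forall t, is_sign (g t)) -> is_sign e -> is_sign d ->
  (#|[set t | (f t == e) && (g t == d)]| * 4)%:Z =
    #|T|%:Z + e * \sum_t f t + d * \sum_t g t + e * d * \sum_t f t * g t.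
Proof.
move=> sf sg se sd.
have -> : #|T|%:Z + e * \sum_t f t + d * \sum_t g t + e * d * \sum_t f t * g t =
    \sum_t (1 + e * f t) * (1 + d * g t).
  rewrite [RHS](eq_bigr (fun t => 1 + e * f t + d * g t + e * d * (f t * g t))) => [|t _].
    by rewrite !big_split /= sumr_const !mulr_sumr natz.
  by ring.
rewrite (eq_bigr (fun t => if (f t == e) && (g t == d) then 4 else 0)); last first.
  by move=> t _; case: (sf t) => ->; case: (sg t) => ->; case: se => ->; case: sd => ->.
by rewrite -big_mkcond /= sumr_const cardsE; lia.
Qed.

Lemma card_sign_balanced f e : (forall t, is_sign (f t)) -> is_sign e ->
  \sum_t f t = 0 -> (#|[set t | f t == e]| * 2 = #|T|)%N.
Proof. by move=> sf se f0; apply/eqP; rewrite -eqz_nat card_sign_eq // f0 mulr0 addr0. Qed.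

Lemma card_sign_pair_balanced f g e d :
  (forall t, is_sign (f t)) -> (forall t, is_sign (g t)) -> is_sign e -> is_sign d ->
  \sum_t f t = 0 -> \sum_t g t = 0 -> \sum_t f t * g t = 0 ->
  (#|[set t | (f t == e) && (g t == d)]| * 4 = #|T|)%N.
Proof.
move=> sf sg se sd f0 g0 fg0; apply/eqP.
by rewrite -eqz_nat card_sign_pair_eq // f0 g0 fg0 !mulr0 !addr0.
Qed.

Lemma sum_sign_halves f z : (forall t, is_sign (z t)) ->
  \sum_t f t = 0 -> \sum_t f t * z t = 0 ->
  \sum_(t in [set t | z t == 1]) f t = 0 /\ \sum_(t in ~: [set t | z t == 1]) f t = 0.
Proof.
move=> sz f0 fz0; set Z := [set t | z t == 1].
have sumZ : \sum_(t in Z) f t * z t = \sum_(t in Z) f t.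
  by apply: eq_bigr => t; rewrite inE => /eqP ->; rewrite mulr1.
have sumNZ : \sum_(t in ~: Z) f t * z t = - \sum_(t in ~: Z) f t.
  by rewrite -sumrN; apply: eq_bigr => t; rewrite !inE; case: (sz t) => -> //; rewrite mulrN1.
rewrite (big_setC_split Z) in f0; rewrite (big_setC_split Z) sumZ sumNZ in fz0.
lia.
Qed.

End SignCounting.

Definition sign_symbol (x : int) : 'I_2 := if x == 1 then ord0 else ord_max.
Definition symbol_sign (s : 'I_2) : int := if s == ord0 then 1 else -1.

Lemma symbol_signP s : is_sign (symbol_sign s).
Proof. by rewrite /symbol_sign; case: ifP; [left|right]. Qed.

Lemma sign_symbolE x s : is_sign x -> (sign_symbol x == s) = (x == symbol_sign s).
Proof. by rewrite /sign_symbol /symbol_sign; case: s => [[|[|//]]] ? /=; case=> ->. Qed.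

Section SignMatrices.
Variables m n : nat.
Implicit Types V W : 'M[int]_(m, n).

Lemma freq_rect_sign_symbols V : (0 < m)%N -> (0 < n)%N ->
  (forall i j, is_sign (V i j)) ->
  (forall i, \sum_j V i j = 0) -> (forall j, \sum_i V i j = 0) ->
  freq_rect (map_mx sign_symbol V).
Proof.
move=> m_gt0 n_gt0 sV rowV colV.
have row_count i s : (#|[set j | map_mx sign_symbol V i j == s]| * 2 = n)%N.
  under eq_finset => j do rewrite mxE sign_symbolE //.
  by rewrite -[n in RHS]card_ord; apply: card_sign_balanced => //; exact: symbol_signP.
have col_count j s : (#|[set i | map_mx sign_symbol V i j == s]| * 2 = m)%N.
  under eq_finset => i do rewrite mxE sign_symbolE //.
  by rewrite -[m in RHS]card_ord; apply: card_sign_balanced => //; exact: symbol_signP.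
split; first by rewrite -(row_count (Ordinal m_gt0) ord0) dvdn_mull.
split; first by rewrite -(col_count (Ordinal n_gt0) ord0) dvdn_mull.
split=> [i s | j s]; first by rewrite -[in RHS](row_count i s) mulnK.
by rewrite -[in RHS](col_count j s) mulnK.
Qed.

Lemma orth_fr_sign_symbols V W :
  (forall i j, is_sign (V i j)) -> (forall i j, is_sign (W i j)) ->
  \sum_i \sum_j V i j = 0 -> \sum_i \sum_j W i j = 0 ->
  \sum_i \sum_j V i j * W i j = 0 ->
  orth_fr (map_mx sign_symbol V) (map_mx sign_symbol W).
Proof.
move=> sV sW V0 W0 VW0; exists (m * n %/ 4)%N => s t.
under eq_finset => p do rewrite !mxE !sign_symbolE //.
rewrite !pair_bigA /= in V0 W0 VW0.
have := card_sign_pair_balanced (fun p => sV p.1 p.2) (fun p => sW p.1 p.2)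
  (symbol_signP s) (symbol_signP t) V0 W0 VW0.
by rewrite card_prod !card_ord => <-; rewrite mulnK.
Qed.

End SignMatrices.

Section HalfFolding.
Variables (T : finType) (n : nat) (P : {set T}) (eP eN : 'I_n -> T).
Hypothesis sum_eP : forall F : T -> int, \sum_(t in P) F t = \sum_j F (eP j).
Hypothesis sum_eN : forall F : T -> int, \sum_(t in ~: P) F t = \sum_j F (eN j).

Definition fold_mx (w : T -> int) : 'M[int]_(4, n) :=
  \matrix_(i < 4, j < n) ((-1) ^+ i * w (if (i < 2)%N then eP j else eN j)).

Lemma fold_mx_sign w : (forall t, is_sign (w t)) -> forall i j, is_sign (fold_mx w i j).
Proof.
move=> sw i j; rewrite mxE; apply: is_signM => //.
by rewrite -signr_odd; case: (odd i); [right|left].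
Qed.

Lemma fold_mx_col_sum w j : \sum_i fold_mx w i j = 0.
Proof. by rewrite !big_ord_recl big_ord0 !mxE /=; ring. Qed.

Lemma fold_mx_row_sum w i :
  \sum_(t in P) w t = 0 -> \sum_(t in ~: P) w t = 0 -> \sum_j fold_mx w i j = 0.
Proof.
move=> wP wN; under eq_bigr => j _ do rewrite mxE.
by rewrite -mulr_sumr; case: (i < 2)%N; rewrite -?(sum_eP w) -?(sum_eN w) ?wP ?wN mulr0.
Qed.

Lemma fold_mx_dot w v :
  \sum_i \sum_j fold_mx w i j * fold_mx v i j = 2 * \sum_t w t * v t.
Proof.
pose wv t := w t * v t.
have entry i j : fold_mx w i j * fold_mx v i j = wv (if (i < 2)%N then eP j else eN j).
  by rewrite !mxE /wv -signr_odd; case: (odd i); ring.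
under eq_bigr => i _ do under eq_bigr => j _ do rewrite entry.
rewrite !big_ord_recl big_ord0 /= -(sum_eP wv) -(sum_eN wv) (big_setC_split P wv).
ring.
Qed.

End HalfFolding.

Section Hadamard.
Variables (N : nat) (H : 'M[int]_N).
Hypothesis hadH : hadamard H.

Lemma hadamard_dot i j : \sum_k H i k * H j k = if i == j then N%:R else 0.
Proof.
have := congr1 (fun M : 'M[int]_N => M i j) hadH.2; rewrite !mxE -mulrb => <-.
by apply: eq_bigr => k _; rewrite mxE.
Qed.

Variable i0 : 'I_N.

Definition normalized r k := H r k * H i0 k.

Lemma normalized_sign r k : is_sign (normalized r k).
Proof. exact: is_signM (hadH.1 r k) (hadH.1 i0 k). Qed.

Lemma normalized_dot r s :
  \sum_k normalized r k * normalized s k = \sum_k H r k * H s k.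
Proof.
apply: eq_bigr => k _.
by rewrite /normalized mulrACA sign_mul_self ?mulr1 //; exact: hadH.1.
Qed.

Lemma sum_normalized r : r != i0 -> \sum_k normalized r k = 0.
Proof. by move=> ri0; rewrite /normalized hadamard_dot (negbTE ri0). Qed.

Variable i1 : 'I_N.
Hypothesis i10 : i1 != i0.

Definition normalized_plus := [set k | normalized i1 k == 1].

Lemma card_normalized_plus : (#|normalized_plus| * 2 = N)%N.
Proof.
rewrite -[N in RHS]card_ord; apply: card_sign_balanced; last exact: sum_normalized.
- exact: normalized_sign.
- by left.
Qed.

Lemma sum_normalized_halves r : r != i0 -> r != i1 ->
  \sum_(k in normalized_plus) normalized r k = 0 /\
  \sum_(k in ~: normalized_plus) normalized r k = 0.
Proof.
move=> ri0 ri1; apply: sum_sign_halves; first exact: normalized_sign.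
  exact: sum_normalized.
by rewrite normalized_dot hadamard_dot (negbTE ri1).
Qed.

End Hadamard.

Local Close Scope ring_scope.

Theorem mainTheorem4 (a : nat) :
  0 < a ->
  (exists H : 'M[int]_(4 * a), hadamard H) ->
  exists Fs : 'I_(4 * a - 2) -> 'M['I_2]_(4, 2 * a), MOFR Fs.
Proof.
move=> a_gt0 [H hadH].
have N_gt1 : 1 < 4 * a by lia.
pose i0 : 'I_(4 * a) := Ordinal (ltnW N_gt1).
pose i1 : 'I_(4 * a) := Ordinal N_gt1.
have i10 : i1 != i0 by [].
pose P := normalized_plus H i0 i1.
have cardP : #|P| = 2 * a by have := card_normalized_plus hadH i10; rewrite -/P; lia.
have cardPC : #|~: P| = 2 * a by have := cardsC P; rewrite card_ord; lia.
have [eP sum_eP] := sum_enum_ord cardP.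
have [eN sum_eN] := sum_enum_ord cardPC.
have row_lt (r : 'I_(4 * a - 2)) : r.+2 < 4 * a by have := ltn_ord r; lia.
pose row r := Ordinal (row_lt r).
have row_neq r s : r != s -> row r != row s.
  by apply: contraNneq => -[] /val_inj ->.
pose V r := fold_mx eP eN (normalized H i0 (row r)).
have sV r := fold_mx_sign eP eN (normalized_sign hadH i0 (row r)).
have rowV r i : (\sum_j V r i j = 0)%R.
  have [sumP sumN] := sum_normalized_halves hadH (i0 := i0) (i1 := i1) (r := row r) isT isT.
  exact: fold_mx_row_sum sum_eP sum_eN _ _ sumP sumN.
exists (fun r => map_mx sign_symbol (V r)); split=> [r | r s rs].
  by apply: freq_rect_sign_symbols; rewrite ?muln_gt0 //; [exact: sV | exact: fold_mx_col_sum].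
apply: (orth_fr_sign_symbols (sV r) (sV s)).
- by rewrite big1 // => i _; exact: rowV.
- by rewrite big1 // => i _; exact: rowV.
- rewrite (fold_mx_dot sum_eP sum_eN) (normalized_dot hadH) (hadamard_dot hadH).
  by rewrite (negbTE (row_neq r s rs)) mulr0.
Qed.
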